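(* For any election $(V,C,\sigma)$ and candidate $a\in C$, if the integral domination graph $G(a)$ admits a perfect matching, then $\mathrm{plu}(a)\ge\mathrm{veto}(a)$.
   Context: An election: finite nonempty voter set $V$, finite candidate set $C$, a profile of linear orders $\sigma_i$ over $C$; $a\succeq_i c$ means $a=c$ or $i$ ranks $a$ above $c$; $\mathrm{top}(i)$ is $i$'s first choice. $\mathrm{plu}(a)$ is the number of voters ranking $a$ first and $\mathrm{veto}(a)$ the number of voters ranking $a$ last. The integral domination graph $G(a)$ is the bipartite graph with both sides copies of $V$ and edge $(i,j)$ iff $a\succeq_i\mathrm{top}(j)$. *)

From mathcomp Require Import all_boot.
Set Implicit Arguments. Unset Strict Implicit. Unset Printing Implicit Defensive.

(* The linear order sigma_i of voter i is encoded by an injective rank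
   function  rk i : C -> 'I_#|C|  (position 0 = first choice);
   injectivity into 'I_#|C| makes it a bijection, i.e. a linear order. *)
Definition profile (V C : finType) := V -> C -> 'I_#|C|.

Definition is_profile (V C : finType) (rk : profile V C) : Prop :=
  forall i : V, injective (rk i).

Definition prefeq (V C : finType) (rk : profile V C) (i : V) (a c : C) : bool :=
  (rk i a <= rk i c)%N.

Definition is_top (V C : finType) (rk : profile V C) (i : V) (c : C) : bool :=
  [forall d, prefeq rk i c d].

Definition is_last (V C : finType) (rk : profile V C) (i : V) (c : C) : bool :=
  [forall d, prefeq rk i d c].

Definition plu (V C : finType) (rk : profile V C) (a : C) : nat :=
  #|[set i : V | is_top rk i a]|.

Definition veto (V C : finType) (rk : profile V C) (a : C) : nat :=
  #|[set i : V | is_last rk i a]|.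

Definition dom_edge (V C : finType) (rk : profile V C) (a : C) (i j : V) : bool :=
  [forall t, is_top rk j t ==> prefeq rk i a t].

(* Perfect matching of the bipartite graph G(a) (both sides copies of V):
   a bijection f from the left copy to the right copy using only edges. *)
Definition has_perfect_matching (V C : finType) (rk : profile V C) (a : C) : Prop :=
  exists f : V -> V, bijective f /\ forall i : V, dom_edge rk a i (f i).

From mathcomp Require Import all_boot.

Set Implicit Arguments.
Unset Strict Implicit.
Unset Printing Implicit Defensive.

(* If [a] is last for voter [i] and [i] is matched to [j], then [a] is at
   least as good for [i] as [top j], hence equal to it; so the matching maps
   the veto voters of [a] injectively into its plurality voters. *)

Lemma prefeq_anti (V C : finType) (rk : profile V C) (i : V) (a c : C) :
  is_profile rk -> prefeq rk i a c -> prefeq rk i c a -> a = c.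
Proof.
move=> rk_inj ac ca; apply: (rk_inj i); apply/val_inj/eqP.
by rewrite eqn_leq; apply/andP.
Qed.

Lemma exists_top (V C : finType) (rk : profile V C) (i : V) (c0 : C) :
  exists t, is_top rk i t.
Proof.
have [t _ t_min] := arg_minnP (fun t => nat_of_ord (rk i t)) (isT : predT c0).
by exists t; apply/forallP => d; apply: t_min.
Qed.

Lemma dom_edge_last_top (V C : finType) (rk : profile V C) (a : C) (i j : V) :
  is_profile rk -> is_last rk i a -> dom_edge rk a i j -> is_top rk j a.
Proof.
move=> rk_inj /forallP a_last /forallP edge_ij.
have [t t_top] := exists_top rk j a.
have a_pref_t : prefeq rk i a t by have := edge_ij t; rewrite t_top.
by rewrite (prefeq_anti rk_inj a_pref_t (a_last t)).
Qed.

Theorem lemma6 (V C : finType) (rk : profile V C) (a : C) :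
  0 < #|V| -> is_profile rk ->
  has_perfect_matching rk a -> veto rk a <= plu rk a.
Proof.
move=> _ rk_inj [f [/bij_inj f_inj edge_f]].
rewrite /veto /plu -(card_imset _ f_inj).
apply/subset_leq_card/subsetP => _ /imsetP [i + ->].
rewrite !inE => a_last.
exact: dom_edge_last_top rk_inj a_last (edge_f i).
Qed.
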